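(* Let $G=\operatorname{SL}(V)$ with $\dim V=n\ge2$. Every $G$-invariant alternating bilinear form on $V\otimes V^*$ is a scalar multiple of $b_V$.
   Context: $K$ is an algebraically closed field of characteristic 2. The form $b_V$ on $V\otimes V^*$ is defined by $b_V(v\otimes f,v'\otimes f')=f(v')f'(v)+f(v)f'(v')$ for $v,v'\in V$, $f,f'\in V^*$. *)

From HB Require Import structures.
From mathcomp Require Import all_boot all_order all_algebra.
Set Implicit Arguments. Unset Strict Implicit. Unset Printing Implicit Defensive.
Import GRing.Theory.
Local Open Scope ring_scope.

(* V = K^n (column vectors), V^* = row vectors.  V (x) V^* is identified with
   'M[K]_n via  v (x) f  |->  v *m f  (column times row).  Under this
   identification g in GL(V) acts by A |-> g A g^-1, and the form
   b_V(v(x)f, v'(x)f') = f(v')f'(v) + f(v)f'(v') becomes, bilinearly extended,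
   b_V(A,B) = tr(AB) + tr(A) tr(B). *)
Definition bV (K : fieldType) (n : nat) (A B : 'M[K]_n) : K :=
  \tr (A *m B) + \tr A * \tr B.

Definition bilinear_form (K : fieldType) (n : nat) (b : 'M[K]_n -> 'M[K]_n -> K) : Prop :=
  (forall (a : K) (A A' B : 'M[K]_n), b (a *: A + A') B = a * b A B + b A' B) /\
  (forall (a : K) (A B B' : 'M[K]_n), b A (a *: B + B') = a * b A B + b A B').

Definition alternating_form (K : fieldType) (n : nat) (b : 'M[K]_n -> 'M[K]_n -> K) : Prop :=
  forall A : 'M[K]_n, b A A = 0.

Definition SL_invariant (K : fieldType) (n : nat) (b : 'M[K]_n -> 'M[K]_n -> K) : Prop :=
  forall g : 'M[K]_n, \det g = 1 ->
    forall A B : 'M[K]_n, b (g *m A *m invmx g) (g *m B *m invmx g) = b A B.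

From HB Require Import structures.
From mathcomp Require Import all_boot all_order all_algebra ring.
Set Implicit Arguments. Unset Strict Implicit. Unset Printing Implicit Defensive.
Import GRing.Theory.
Local Open Scope ring_scope.

(* A bilinear form is determined by its values b(E_ij, E_kl) on matrix units,
   and the proof computes these values for an SL-invariant alternating b:
   - over an algebraically closed field every invertible g is a scalar
     multiple of an element of SL, and scalars act trivially by conjugation,
     so b is even GL-invariant;
   - invariance under the diagonal torus kills every b(E_ij, E_kl) except
     the "weight zero" ones, i = j /\ k = l or j = k /\ i = l;
   - invariance under the transvections 1 + E_pq shows that the values
     b(E_ii, E_kk) (i <> k) all agree with one constant c and that
     b(E_ji, E_ij) = - b(E_ii, E_jj); alternation gives b(E_ii, E_ii) = 0;
   - in characteristic 2 these values are exactly c times those of b_V. *)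

Section BilinearCalculus.
Variables (K : fieldType) (n : nat) (b : 'M[K]_n -> 'M[K]_n -> K).
Hypothesis hb : bilinear_form b.

Lemma bilinear0l B : b 0 B = 0.
Proof. by have := hb.1 (-1) 0 0 B; rewrite scaler0 addr0 mulN1r addNr. Qed.

Lemma bilinear0r A : b A 0 = 0.
Proof. by have := hb.2 (-1) A 0 0; rewrite scaler0 addr0 mulN1r addNr. Qed.

Lemma bilinearDl A A' B : b (A + A') B = b A B + b A' B.
Proof. by have := hb.1 1 A A' B; rewrite scale1r mul1r. Qed.

Lemma bilinearZl a A B : b (a *: A) B = a * b A B.
Proof. by have := hb.1 a A 0 B; rewrite !addr0 bilinear0l addr0. Qed.

Lemma bilinearBl A A' B : b (A - A') B = b A B - b A' B.
Proof. by rewrite bilinearDl -scaleN1r bilinearZl mulN1r. Qed.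

Lemma bilinearDr A B B' : b A (B + B') = b A B + b A B'.
Proof. by have := hb.2 1 A B B'; rewrite scale1r mul1r. Qed.

Lemma bilinearZr a A B : b A (a *: B) = a * b A B.
Proof. by have := hb.2 a A B 0; rewrite !addr0 bilinear0r addr0. Qed.

Lemma bilinear_suml (I : Type) (r : seq I) (P : pred I) (F : I -> 'M[K]_n) B :
  b (\sum_(i <- r | P i) F i) B = \sum_(i <- r | P i) b (F i) B.
Proof. by apply: (big_morph (b^~ B)) => [A A'|]; rewrite ?bilinearDl ?bilinear0l. Qed.

Lemma bilinear_sumr (I : Type) (r : seq I) (P : pred I) (F : I -> 'M[K]_n) A :
  b A (\sum_(i <- r | P i) F i) = \sum_(i <- r | P i) b A (F i).
Proof. by apply: (big_morph (b A)) => [B B'|]; rewrite ?bilinearDr ?bilinear0r. Qed.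

Lemma bilinear_deltaE A B : b A B = \sum_i \sum_j \sum_k \sum_l
  A i j * B k l * b (delta_mx i j) (delta_mx k l).
Proof.
rewrite {1}(matrix_sum_delta A) {1}(matrix_sum_delta B) bilinear_suml.
apply: eq_bigr => i _; rewrite bilinear_suml; apply: eq_bigr => j _.
rewrite bilinearZl bilinear_sumr mulr_sumr; apply: eq_bigr => k _.
rewrite bilinear_sumr mulr_sumr; apply: eq_bigr => l _.
by rewrite bilinearZr !mulrA.
Qed.

(* Polarizing b(A + B, A + B) = 0: an alternating form is skew-symmetric. *)
Lemma alternating_skew : alternating_form b -> forall A B, b A B = - b B A.
Proof.
move=> halt A B; apply/eqP; rewrite -addr_eq0.
by have := halt (A + B); rewrite !(bilinearDl, bilinearDr) !halt add0r addr0 => ->.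
Qed.

End BilinearCalculus.

Lemma bilinear_eq_on_delta (K : fieldType) n (b b' : 'M[K]_n -> 'M[K]_n -> K) :
  bilinear_form b -> bilinear_form b' ->
  (forall i j k l, b (delta_mx i j) (delta_mx k l) = b' (delta_mx i j) (delta_mx k l)) ->
  forall A B, b A B = b' A B.
Proof.
move=> hb hb' e A B; rewrite (bilinear_deltaE hb) (bilinear_deltaE hb').
do 4!(apply: eq_bigr => ? _); by rewrite e.
Qed.

Lemma trace_delta (K : fieldType) n (i j : 'I_n) :
  \tr (delta_mx i j : 'M[K]_n) = (i == j)%:R.
Proof.
rewrite /mxtrace (bigD1 i) //= big1 ?addr0 => [|k /negPf ki]; rewrite !mxE ?ki //.
by rewrite eqxx /= eq_sym.
Qed.

Lemma scaled_bV_bilinear (K : fieldType) n (c : K) :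
  bilinear_form (fun A B : 'M[K]_n => c * bV A B).
Proof.
split=> a A A' B; rewrite /bV.
- by rewrite mulmxDl -scalemxAl !mxtraceD !mxtraceZ; ring.
- by rewrite mulmxDr -scalemxAr !mxtraceD !mxtraceZ; ring.
Qed.

Lemma bV_delta (K : fieldType) n (i j k l : 'I_n) :
  bV (delta_mx i j : 'M[K]_n) (delta_mx k l) =
  ((j == k) && (i == l))%:R + ((i == j) && (k == l))%:R.
Proof.
rewrite /bV mul_delta_mx_cond raddfMn /= !trace_delta -!natrM !mulnb.
by case: (j == k); rewrite ?mulr1n ?mulr0n // andbF.
Qed.

Section Conjugation.
Variables (K : fieldType) (n : nat).
Local Notation E := (@delta_mx K n n).

Lemma conj_eq (h A X : 'M[K]_n) :
  h \in unitmx -> h *m A = X *m h -> h *m A *m invmx h = X.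
Proof. by move=> hu ->; rewrite mulmxK. Qed.

Lemma diag_unit (d : 'rV[K]_n) : (forall m, d 0 m != 0) -> diag_mx d \in unitmx.
Proof. by move=> dn; rewrite unitmxE det_diag unitfE; apply/prodf_neq0 => m _. Qed.

Lemma diag_conj_delta (d : 'rV[K]_n) i j : (forall m, d 0 m != 0) ->
  diag_mx d *m E i j *m invmx (diag_mx d) = (d 0 i / d 0 j) *: E i j.
Proof.
move=> dn; apply: conj_eq; first exact: diag_unit.
apply/matrixP => x y; rewrite mul_diag_mx mul_mx_diag !mxE.
case: (x =P i) => [->|_]; case: (y =P j) => [->|_]; rewrite ?mulr0 ?mul0r //.
by rewrite !mulr1 divfK.
Qed.

Definition transvection (p q : 'I_n) : 'M[K]_n := 1%:M + E p q.

Lemma transvection_unit p q : p != q -> transvection p q \in unitmx.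
Proof.
move=> pq; have [] // := @mulmx1_unit _ _ (transvection p q) (1%:M - E p q).
rewrite mulmxDl mul1mx mulmxBr mulmx1 mul_delta_mx_cond eq_sym (negPf pq).
by rewrite mulr0n subr0 subrK.
Qed.

Lemma transvection_conj_swap p q : p != q ->
  transvection p q *m E q p *m invmx (transvection p q) =
  E q p + E p p - E q q - E p q.
Proof.
move=> pq; apply: conj_eq; first exact: transvection_unit.
rewrite !mulmxDl !mulmxDr mul1mx !mulmx1 !mulNmx !mul_delta_mx_cond.
rewrite !eqxx eq_sym (negPf pq) !mulr1n !mulr0n.
by apply/matrixP => x y; rewrite !mxE; ring.
Qed.

Lemma transvection_conj_diag p q : p != q ->
  transvection p q *m E q q *m invmx (transvection p q) = E q q + E p q.
Proof.
move=> pq; apply: conj_eq; first exact: transvection_unit.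
rewrite !mulmxDl !mulmxDr mul1mx !mulmx1 !mul_delta_mx_cond.
by rewrite eqxx eq_sym (negPf pq) !mulr1n !mulr0n !addr0.
Qed.

Lemma transvection_conj_fixed p q r : p != q -> r != p -> r != q ->
  transvection p q *m E r r *m invmx (transvection p q) = E r r.
Proof.
move=> pq rp rq; apply: conj_eq; first exact: transvection_unit.
rewrite !mulmxDl !mulmxDr mul1mx !mulmx1 !mul_delta_mx_cond.
by rewrite (negPf rp) eq_sym (negPf rq) !mulr0n !addr0.
Qed.

End Conjugation.

Definition GL_invariant (K : fieldType) n (b : 'M[K]_n -> 'M[K]_n -> K) : Prop :=
  forall g : 'M[K]_n, g \in unitmx ->
    forall A B : 'M[K]_n, b (g *m A *m invmx g) (g *m B *m invmx g) = b A B.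

Lemma closed_nth_root (K : closedFieldType) n (c : K) :
  (0 < n)%N -> exists s : K, s ^+ n = c.
Proof.
move=> n_gt0; have [s hs] := solve_monicpoly (fun i => if i == 0%N then c else 0) n_gt0.
exists s; rewrite hs; case: n n_gt0 {hs} => // n _.
by rewrite big_ord_recl /= expr0 mulr1 big1 ?addr0 // => i _; rewrite mul0r.
Qed.

(* Over an algebraically closed field, SL-invariance implies GL-invariance:
   g = s^-1 (s g) with s^n = det(g)^-1, and scalars conjugate trivially. *)
Lemma SL_GL_invariant (K : closedFieldType) n (b : 'M[K]_n -> 'M[K]_n -> K) :
  (0 < n)%N -> SL_invariant b -> GL_invariant b.
Proof.
move=> n_gt0 hSL h hu A B; have det_h : \det h != 0 by rewrite -unitfE -unitmxE.
have [s hs] := closed_nth_root (\det h)^-1 n_gt0.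
have s0 : s != 0.
  by apply: contra_neq (invr_neq0 det_h) => s0; rewrite -hs s0 expr0n gtn_eqF.
have det_sh : \det (s *: h) = 1 by rewrite detZ hs mulVf.
have sh_unit : s *: h \in unitmx by rewrite unitmxE det_sh unitr1.
have conj_sh X : s *: h *m X *m invmx (s *: h) = h *m X *m invmx h.
  by rewrite (invmxZ sh_unit) -!scalemxAl -scalemxAr scalerA mulfV // scale1r.
by rewrite -!conj_sh hSL.
Qed.

(* A scalar t with t <> 0, t <> 1 and t^2 <> 1, used to build torus elements
   separating weights: any root of X^2 - X - 1 will do. *)
Lemma exists_generic_scalar (K : closedFieldType) :
  exists t : K, [/\ t != 0, t != 1 & t * t != 1].
Proof.
have [t ht] := @solve_monicpoly K 2 (fun _ => 1) isT.
rewrite !big_ord_recl big_ord0 /= !mul1r expr0 addr0 in ht.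
have t0 : t != 0.
  by apply: contra_eq_neq ht => ->; rewrite expr0n addr0 eq_sym oner_neq0.
exists t; split => //; last by rewrite -expr2 ht -subr_eq0 addrC addKr.
by apply: contra_eq_neq ht => ->; rewrite expr1n -{1}[1]addr0 (inj_eq (addrI _)) eq_sym oner_neq0.
Qed.

Section InvariantForms.
Variables (K : closedFieldType) (n : nat) (b : 'M[K]_n -> 'M[K]_n -> K).
Hypotheses (hb : bilinear_form b) (hGL : GL_invariant b).
Local Notation E := (@delta_mx K n n).

(* diag(d) scales b(E_ij, E_kl) by (d_i d_k) / (d_j d_l), so b(E_ij, E_kl)
   vanishes as soon as this weight differs from 1 for some d. *)
Lemma torus_vanish (d : 'rV[K]_n) i j k l : (forall m, d 0 m != 0) ->
  d 0 i * d 0 k != d 0 j * d 0 l -> b (E i j) (E k l) = 0.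
Proof.
move=> dn neq; have := hGL (diag_unit dn) (E i j) (E k l).
rewrite !diag_conj_delta // bilinearZl // bilinearZr //; set v := b _ _ => e.
have dj := dn j; have dl := dn l.
have : v * (d 0 i * d 0 k - d 0 j * d 0 l) = 0.
  transitivity (d 0 i / d 0 j * (d 0 k / d 0 l * v) * (d 0 j * d 0 l)
                - v * (d 0 j * d 0 l)).
    by field; apply/andP.
  by rewrite e mulrC subrr.
by move/eqP; rewrite mulf_eq0 subr_eq0 (negPf neq) orbF => /eqP.
Qed.

(* Only the weight-zero pairs (E_ii, E_kk) and (E_ij, E_ji) can pair
   nontrivially; the torus elements diag(1,..,t,..,1) kill the others. *)
Lemma off_weight_vanish i j k l :
  ~~ ((i == j) && (k == l)) -> ~~ ((j == k) && (i == l)) -> b (E i j) (E k l) = 0.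
Proof.
move=> h1 h2; have [t [t0 t1 tt1]] := exists_generic_scalar K.
pose d p : 'rV[K]_n := \row_m (if m == p then t else 1).
have dE p m : d p 0 m = if m == p then t else 1 by rewrite mxE.
have dn p m : d p 0 m != 0 by rewrite dE; case: ifP; rewrite ?oner_neq0.
have scale_ne x : x != 0 -> x * t != x.
  by move=> x0; rewrite -{2}[x]mulr1 (inj_eq (mulfI x0)).
have [eij|ij] := eqVneq i j.
  subst j; have lk : l != k by rewrite eqxx eq_sym in h1.
  apply: (torus_vanish (dn k)); rewrite (dE k k) (dE k l) eqxx (negPf lk) mulr1.
  exact/scale_ne/dn.
have [eil|il] := eqVneq i l.
  subst l; have jk : j != k by rewrite eqxx andbT in h2.
  apply: (torus_vanish (dn k)); rewrite (dE k k) (dE k j) eqxx (negPf jk) mul1r.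
  exact/scale_ne/dn.
apply: (torus_vanish (dn i)); rewrite !dE eqxx (eq_sym j) (negPf ij) (eq_sym l) (negPf il).
by rewrite mulr1; case: (k == i); rewrite ?mulr1.
Qed.

(* Conjugating (E_qp, E_rr) by 1 + E_pq, for r outside {p, q}. *)
Lemma diag_pair_shift p q r : p != q -> r != p -> r != q ->
  b (E p p) (E r r) = b (E q q) (E r r).
Proof.
move=> pq rp rq; have := hGL (transvection_unit K pq) (E q p) (E r r).
rewrite transvection_conj_swap // transvection_conj_fixed //.
rewrite !bilinearBl // !bilinearDl // (@off_weight_vanish p q r r); first last.
- by rewrite (eq_sym q r) (negPf rq).
- by rewrite (negPf pq).
by rewrite subr0 -addrA -[RHS]addr0 => /addrI /eqP; rewrite subr_eq0 => /eqP.
Qed.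

(* Conjugating (E_qp, E_qq) by 1 + E_pq. *)
Lemma antidiag_pair p q : alternating_form b -> p != q ->
  b (E q p) (E p q) = - b (E p p) (E q q).
Proof.
move=> halt pq; have qp : q != p by rewrite eq_sym.
have := hGL (transvection_unit K pq) (E q p) (E q q).
rewrite transvection_conj_swap // transvection_conj_diag //.
rewrite !bilinearBl // !bilinearDl // !bilinearDr // !halt.
rewrite (@off_weight_vanish p p p q) ?(@off_weight_vanish q q p q)
  ?(@off_weight_vanish p q q q) ?(@off_weight_vanish q p q q);
  rewrite ?eqxx ?(negPf pq) ?(negPf qp) ?andbF //.
by rewrite !add0r !addr0 !subr0 => /eqP; rewrite addr_eq0 => /eqP.
Qed.

End InvariantForms.

Section Characteristic2.
Variables (K : closedFieldType) (n : nat) (b : 'M[K]_n -> 'M[K]_n -> K).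
Hypotheses (hb : bilinear_form b) (hGL : GL_invariant b).
Hypotheses (halt : alternating_form b) (charK : 2%N \in [pchar K]).
Local Notation E := (@delta_mx K n n).

Lemma alternating_symmetric A B : b A B = b B A.
Proof. by rewrite (alternating_skew hb halt) oppr_pchar2. Qed.

Lemma diag_pair_const i k i' k' : i != k -> i' != k' ->
  b (E i i) (E k k) = b (E i' i') (E k' k').
Proof.
have shift x y r : x != r -> y != r -> b (E x x) (E r r) = b (E y y) (E r r).
  move=> xr yr; have [<-//|xy] := eqVneq x y.
  by apply: diag_pair_shift; rewrite // eq_sym.
move=> ik i'k'; have [ek|k'k] := eqVneq k' k; first by subst k'; exact: shift.
by rewrite (shift i k' k) // alternating_symmetric (shift k i' k') // eq_sym.
Qed.

Lemma delta_proportional_bV i0 k0 : i0 != k0 -> forall i j k l,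
  b (E i j) (E k l) = b (E i0 i0) (E k0 k0) * bV (E i j) (E k l).
Proof.
move=> i0k0 i j k l; rewrite bV_delta.
have [/andP[/eqP eij /eqP ekl]|h1] := boolP ((i == j) && (k == l)).
  subst j l; have [eik|ik] := eqVneq i k.
    by subst k; rewrite halt addrr_pchar2 // mulr0.
  by rewrite (diag_pair_const ik i0k0) add0r mulr1.
have [/andP[/eqP ejk /eqP eil]|h2] := boolP ((j == k) && (i == l)).
  subst k l; have ji : j != i by apply: contra h1 => /eqP ->; rewrite eqxx.
  rewrite antidiag_pair // oppr_pchar2 // (diag_pair_const ji i0k0).
  by rewrite addr0 mulr1.
by rewrite off_weight_vanish // addr0 mulr0.
Qed.

End Characteristic2.

Theorem lemma8p2 (K : closedFieldType) (n : nat)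
  (charK : 2%N \in [pchar K]) (hn : (2 <= n)%N)
  (b : 'M[K]_n -> 'M[K]_n -> K) :
  bilinear_form b -> alternating_form b -> SL_invariant b ->
  exists c : K, forall A B : 'M[K]_n, b A B = c * bV A B.
Proof.
move=> hb halt hSL; have n_gt0 : (0 < n)%N := ltnW hn.
have hGL := SL_GL_invariant n_gt0 hSL.
pose i0 : 'I_n := Ordinal n_gt0; pose i1 : 'I_n := Ordinal hn.
pose c := b (delta_mx i0 i0) (delta_mx i1 i1).
exists c; apply: (bilinear_eq_on_delta hb (scaled_bV_bilinear n c)).
exact: delta_proportional_bV.
Qed.
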